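(* Let $R\subseteq\mathbb{N}$ be such that there is a positive integer $k$ with $R\cap k\mathbb{Z}=\emptyset$. Then for any positive integer $d$, there exists a colouring of $\mathbb{R}^d$ with $2k^2$ colours containing no monochromatic congruent copy of $rL^d$ for any $r\in R$.
   Context: $L^d$ denotes a three-point set $\{x,y,z\}\subseteq\mathbb{Z}^d$ with $\|x-y\|_2=\|y-z\|_2=1$ and $\|x-z\|_2=2$ (three equally spaced collinear points), and $rL^d=\{rx,ry,rz\}$. A congruent copy is the image under an isometry of $\mathbb{R}^d$. *)

From HB Require Import structures.
From mathcomp Require Import all_boot all_order all_algebra.
From mathcomp Require Import reals.
Set Implicit Arguments. Unset Strict Implicit. Unset Printing Implicit Defensive.
Import Order.TTheory GRing.Theory Num.Theory.
Local Open Scope ring_scope.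

Definition enorm (R : realType) (d : nat) (u : 'rV[R]_d) : R :=
  Num.sqrt (\sum_(i < d) (u 0 i) ^+ 2).

Definition intv (R : realType) (d : nat) (x : 'rV[int]_d) : 'rV[R]_d :=
  map_mx (fun n : int => n%:~R) x.

Definition is_Ld (R : realType) (d : nat) (x y z : 'rV[int]_d) : Prop :=
  enorm (intv R x - intv R y) = 1 /\ enorm (intv R y - intv R z) = 1 /\
  enorm (intv R x - intv R z) = 2.

Definition is_isometry (R : realType) (d : nat) (f : 'rV[R]_d -> 'rV[R]_d) : Prop :=
  forall u v, enorm (f u - f v) = enorm (u - v).

From HB Require Import structures.
From mathcomp Require Import all_boot all_order all_algebra.
From mathcomp Require Import reals.
From mathcomp Require Import ring lra zify.
Set Implicit Arguments. Unset Strict Implicit. Unset Printing Implicit Defensive.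
Import Order.TTheory GRing.Theory Num.Theory.
Local Open Scope ring_scope.

(* If |a - b| = |b - c| = r and |a - c| = 2r, then b is the midpoint of a and
   c, and the parallelogram law gives |a|^2 - 2|b|^2 + |c|^2 = 2r^2; so
   t = |.|^2 / 2 has second difference exactly r^2 along the copy.  Colour u
   by the half of [0,1) containing the fractional part of t(u) and by the
   residue of the integer part of t(u) modulo k^2.  On a monochromatic copy
   the fractional parts contribute less than 1 to the second difference, so
   the integer parts alone have second difference r^2, which is then
   divisible by k^2; hence k divides r. *)

Section SquaredNorm.
Variables (R : realFieldType) (d : nat).
Implicit Types (u v a b c p q : 'rV[R]_d).

Definition sqnorm u : R := \sum_(i < d) u 0 i ^+ 2.
Definition dotp u v : R := \sum_(i < d) u 0 i * v 0 i.

Lemma sqnorm_ge0 u : 0 <= sqnorm u.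
Proof. by apply: sumr_ge0 => i _; rewrite sqr_ge0. Qed.

Lemma sqnorm_eq0 u : sqnorm u = 0 -> u = 0.
Proof.
move=> /eqP; rewrite psumr_eq0 => [/allP u0|i _]; last exact: sqr_ge0.
apply/rowP => i; rewrite mxE.
by have := u0 i (mem_index_enum _); rewrite sqrf_eq0 => /eqP.
Qed.

Lemma sqnormZ (r : R) u : sqnorm (r *: u) = r ^+ 2 * sqnorm u.
Proof. by rewrite /sqnorm mulr_sumr; apply: eq_bigr => i _; rewrite mxE exprMn. Qed.

Lemma sqnormD p q : sqnorm (p + q) = sqnorm p + sqnorm q + 2 * dotp p q.
Proof.
rewrite /sqnorm /dotp mulr_sumr -!big_split.
by apply: eq_bigr => i _; rewrite !mxE /=; ring.
Qed.

Lemma sqnormB p q : sqnorm (p - q) = sqnorm p + sqnorm q - 2 * dotp p q.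
Proof.
rewrite /sqnorm /dotp mulr_sumr -sumrN -!big_split.
by apply: eq_bigr => i _; rewrite !mxE /=; ring.
Qed.

Lemma sqnorm_triangle_eq p q (s : R) :
  sqnorm p = s -> sqnorm q = s -> sqnorm (p + q) = 4 * s -> p = q.
Proof.
move=> ps qs pqs.
have dot_s : dotp p q = s by move: pqs; rewrite sqnormD ps qs; lra.
apply/eqP; rewrite -subr_eq0; apply/eqP/sqnorm_eq0.
by rewrite sqnormB ps qs dot_s; ring.
Qed.

Lemma sqnorm_parallelogram b p :
  sqnorm (b + p) - 2 * sqnorm b + sqnorm (b - p) = 2 * sqnorm p.
Proof. by rewrite sqnormD sqnormB; ring. Qed.

Lemma sqnorm_second_difference a b c (s : R) :
  sqnorm (a - b) = s -> sqnorm (b - c) = s -> sqnorm (a - c) = 4 * s ->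
  sqnorm a - 2 * sqnorm b + sqnorm c = 2 * s.
Proof.
move=> abs bcs acs.
have steps : a - b = b - c.
  by apply: (sqnorm_triangle_eq abs bcs); rewrite addrA subrK.
have -> : a = b + (a - b) by rewrite addrC subrK.
have -> : c = b - (a - b) by rewrite steps opprB addrC subrK.
by rewrite sqnorm_parallelogram abs.
Qed.

End SquaredNorm.

Section Euclidean.
Variables (R : realType) (d : nat).

Lemma sqnorm_enorm (u : 'rV[R]_d) : sqnorm u = enorm u ^+ 2.
Proof. by rewrite /enorm sqr_sqrtr // sqnorm_ge0. Qed.

Lemma sqnorm_isometry_scaled (f : 'rV[R]_d -> 'rV[R]_d) (r : R) u v :
  is_isometry f -> sqnorm (f (r *: u) - f (r *: v)) = r ^+ 2 * enorm (u - v) ^+ 2.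
Proof.
by move=> f_iso; rewrite sqnorm_enorm f_iso -scalerBr -sqnorm_enorm sqnormZ sqnorm_enorm.
Qed.

Lemma isometry_scaled_Ld_second_difference (f : 'rV[R]_d -> 'rV[R]_d) (r : R) x y z :
  is_Ld R x y z -> is_isometry f ->
  sqnorm (f (r *: intv R x)) - 2 * sqnorm (f (r *: intv R y)) + sqnorm (f (r *: intv R z))
    = 2 * r ^+ 2.
Proof.
move=> [xy [yz xz]] f_iso.
apply: sqnorm_second_difference; rewrite sqnorm_isometry_scaled //.
- by rewrite xy expr1n mulr1.
- by rewrite yz expr1n mulr1.
- by rewrite xz mulrC; congr (_ * _); rewrite expr2; lra.
Qed.

End Euclidean.

Lemma intr_near_eq (R : realDomainType) (z w : int) : `|z%:~R - w%:~R : R| < 1 -> z = w.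
Proof. by rewrite -intrB -intr_norm -[1]/(1%:~R) ltr_int; lia. Qed.

Lemma ltn_absz_modz (m : nat) (z : int) : (0 < m)%N -> (`|(z %% m)%Z|%N < m)%N.
Proof.
move=> m_gt0; have m_pos : (0 < m%:Z)%R by rewrite ltz_nat.
have := ltz_pmod z m_pos; have := modz_ge0 z (lt0r_neq0 m_pos); lia.
Qed.

Section HalfUnitColouring.
Variables (R : archiRealFieldType) (m : nat).
Hypothesis m_gt0 : (0 < m)%N.
Implicit Types (s t : R).

Definition frac t : R := t - (Num.floor t)%:~R.

Lemma frac_itv t : 0 <= frac t < 1.
Proof.
have /andP[floor_le_t t_lt_floor1] := floor_itv t.
by rewrite /frac; rewrite intrD in t_lt_floor1; apply/andP; split; lra.
Qed.

Definition floor_residue t : 'I_m := Ordinal (ltn_absz_modz (Num.floor t) m_gt0).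

Definition colour_key t : bool * 'I_m := (1/2 <= frac t, floor_residue t).

Lemma card_colour_key : #|{: bool * 'I_m}| = (2 * m)%N.
Proof. by rewrite card_prod card_bool card_ord. Qed.

Definition colour t : 'I_(2 * m) := cast_ord card_colour_key (enum_rank (colour_key t)).

Lemma colour_key_eq s t : colour s = colour t -> colour_key s = colour_key t.
Proof. by move/cast_ord_inj/enum_rank_inj. Qed.

Lemma frac_same_half s t : (1/2 <= frac s) = (1/2 <= frac t) -> `|frac s - frac t| < 1/2.
Proof.
have /andP[s0 s1] := frac_itv s; have /andP[t0 t1] := frac_itv t.
rewrite ltr_norml; case: lerP; case: lerP => // *; apply/andP; split; lra.
Qed.

Lemma floor_residue_dvd s t : floor_residue s = floor_residue t ->
  (m %| Num.floor s - Num.floor t)%Z.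
Proof.
move=> /(congr1 val) /= res_eq; rewrite -eqz_mod_dvd; apply/eqP.
have m_neq0 : m%:Z != 0 by rewrite eqz_nat -lt0n.
have := modz_ge0 (Num.floor s) m_neq0; have := modz_ge0 (Num.floor t) m_neq0; lia.
Qed.

Lemma colour_second_difference a b c (n : int) :
  colour a = colour b -> colour b = colour c -> a - 2 * b + c = n%:~R -> (m %| n)%Z.
Proof.
move=> /colour_key_eq/pair_equal_spec[half_ab res_ab].
move=> /colour_key_eq/pair_equal_spec[half_bc res_bc] abc_n.
have floor_n : n = Num.floor a - 2 * Num.floor b + Num.floor c.
  apply: (@intr_near_eq R).
  have -> : n%:~R - (Num.floor a - 2 * Num.floor b + Num.floor c)%:~R
      = (frac a - frac b) - (frac b - frac c) :> R.
    by rewrite -abc_n /frac !(intrD, intrN, intrM); ring.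
  have := frac_same_half half_ab; have := frac_same_half half_bc.
  by move=> *; apply: le_lt_trans (ler_normB _ _) _; lra.
have -> : n = (Num.floor a - Num.floor b) - (Num.floor b - Num.floor c).
  by rewrite floor_n; ring.
by apply: rpredB; apply: floor_residue_dvd.
Qed.

End HalfUnitColouring.

Theorem proposition30 (R : realType) (S : nat -> Prop) (k : nat)
  (hk : (0 < k)%N) (hS : forall r : nat, S r -> ~~ (k %| r)%N)
  (d : nat) (hd : (0 < d)%N) :
  exists c : 'rV[R]_d -> 'I_(2 * k ^ 2),
    forall r : nat, S r ->
    forall x y z : 'rV[int]_d, is_Ld R x y z ->
    forall f : 'rV[R]_d -> 'rV[R]_d, is_isometry f ->
      ~ (c (f (r%:R *: intv R x)) = c (f (r%:R *: intv R y)) /\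
         c (f (r%:R *: intv R y)) = c (f (r%:R *: intv R z))).
Proof.
have k2_gt0 : (0 < k ^ 2)%N by rewrite expn_gt0 hk.
exists (fun u => colour k2_gt0 (sqnorm u / 2)).
move=> r Sr x y z xyz f f_iso [col_xy col_yz].
apply: (negP (hS r Sr)); rewrite -(@dvdn_pexp2r _ _ 2) //.
have := colour_second_difference col_xy col_yz (n := (r ^ 2)%N); rewrite dvdzE; apply.
have := isometry_scaled_Ld_second_difference r%:R xyz f_iso.
by rewrite -pmulrn natrX; lra.
Qed.
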